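(* Let $g,h>\tfrac12$, let $M_{\mathrm{I}},M_{\mathrm{II}}\in\mathbb{Z}_{\ge0}$, $M=M_{\mathrm{I}}+M_{\mathrm{II}}$, let $\mathcal{D}=((d_1,t_1),\ldots,(d_M,t_M))$ be an ordered list of pairwise distinct seed labels as described in the context, containing exactly $M_{\mathrm{I}}$ labels of Type I and $M_{\mathrm{II}}$ labels of Type II, and let $n\in\mathbb{Z}_{\ge0}$. For $N\in\{M,M+1\}$, $j=1,\ldots,N$ and $-1<\eta<1$ define $$X^{(N)}_{(\mathrm{v},\mathrm{I}),j}(\eta)=\frac{(-1)^{j-1}}{2^{j-1}}\big(h-\tfrac12-\mathrm{v}\big)_{j-1}\Big(\frac{1+\eta}{2}\Big)^{N-j}P^{(g+j-\frac32,\,\frac32-h-j)}_{\mathrm{v}}(\eta),$$ $$X^{(N)}_{(\mathrm{v},\mathrm{II}),j}(\eta)=\frac{1}{2^{j-1}}\big(g-\tfrac12-\mathrm{v}\big)_{j-1}\Big(\frac{1-\eta}{2}\Big)^{N-j}P^{(\frac32-g-j,\,h+j-\frac32)}_{\mathrm{v}}(\eta),$$ $$Z^{(N)}_{n,j}(\eta)=\frac{1}{2^{j-1}}(n+g+h)_{j-1}P^{(g+j-\frac32,\,h+j-\frac32)}_{n+1-j}(\eta),$$ and let $\vec X^{(N)}_{(\mathrm{v},t)}$, $\vec Z^{(N)}_n$ denote the corresponding column vectors $(\cdot)_{j=1}^N$. Then for $-1<\eta<1$, with $A(\eta)=\big(\frac{1+\eta}{2}\big)^{-M_{\mathrm{I}}(M_{\mathrm{I}}-1)}\big(\frac{1-\eta}{2}\big)^{-M_{\mathrm{II}}(M_{\mathrm{II}}-1)}$,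 $$\Xi_{\mathcal{D}}(\eta)=A(\eta)\det\big(\vec X^{(M)}_{(d_1,t_1)}(\eta)\ \cdots\ \vec X^{(M)}_{(d_M,t_M)}(\eta)\big),$$ $$P_{\mathcal{D},n}(\eta)=A(\eta)\det\big(\vec X^{(M+1)}_{(d_1,t_1)}(\eta)\ \cdots\ \vec X^{(M+1)}_{(d_M,t_M)}(\eta)\ \vec Z^{(M+1)}_n(\eta)\big).$$
   Context: $(a)_k=a(a+1)\cdots(a+k-1)$, $(a)_0=1$. For real $\alpha,\beta$ and $m\in\mathbb{Z}_{\ge0}$ the Jacobi polynomial is $P^{(\alpha,\beta)}_m(\eta)=\frac{1}{m!}\sum_{k=0}^m\frac{(-m)_k(m+\alpha+\beta+1)_k(\alpha+k+1)_{m-k}}{k!}\big(\frac{1-\eta}{2}\big)^k$ (equal to $\frac{(\alpha+1)_m}{m!}\sum_{k}\frac{(-m)_k(m+\alpha+\beta+1)_k}{k!(\alpha+1)_k}(\frac{1-\eta}{2})^k$ when defined), and $P^{(\alpha,\beta)}_m\equiv0$ for $m<0$. For $a\in\mathbb{R}$, $[a]'$ denotes the greatest integer strictly less than $a$. Fix $g,h>\frac12$. A seed label is a pair $(\mathrm{v},t)$, $t\in\{\mathrm{I},\mathrm{II}\}$, with $\mathrm{v}\in\{0,1,\ldots,[h-\frac12]'\}$ if $t=\mathrm{I}$ and $\mathrm{v}\in\{0,1,\ldots,[g-\frac12]'\}$ if $t=\mathrm{II}$. For $-1<\eta<1$ define $\mu_{(\mathrm{v},\mathrm{I})}(\eta)=\big(\frac{1+\eta}{2}\big)^{\frac12-h}P^{(g-\frac12,\frac12-h)}_{\mathrm{v}}(\eta)$,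 $\mu_{(\mathrm{v},\mathrm{II})}(\eta)=\big(\frac{1-\eta}{2}\big)^{\frac12-g}P^{(\frac12-g,h-\frac12)}_{\mathrm{v}}(\eta)$, and $P_n(\eta)=P^{(g-\frac12,h-\frac12)}_n(\eta)$. The Wronskian with respect to $\eta$ is $\mathrm{W}[f_1,\ldots,f_m](\eta)=\det\big(\frac{d^{j-1}f_k}{d\eta^{j-1}}\big)_{1\le j,k\le m}$. For an ordered list $\mathcal{D}=((d_1,t_1),\ldots,(d_M,t_M))$ of seed labels with $M_{\mathrm{I}}$ of Type I and $M_{\mathrm{II}}$ of Type II, the denominator polynomial and multi-indexed Jacobi polynomials are $\Xi_{\mathcal{D}}(\eta)=\mathrm{W}[\mu_{(d_1,t_1)},\ldots,\mu_{(d_M,t_M)}](\eta)\big(\frac{1-\eta}{2}\big)^{(M_{\mathrm{I}}+g-\frac12)M_{\mathrm{II}}}\big(\frac{1+\eta}{2}\big)^{(M_{\mathrm{II}}+h-\frac12)M_{\mathrm{I}}}$ and $P_{\mathcal{D},n}(\eta)=\mathrm{W}[\mu_{(d_1,t_1)},\ldots,\mu_{(d_M,t_M)},P_n](\eta)\big(\frac{1-\eta}{2}\big)^{(M_{\mathrm{I}}+g+\frac12)M_{\mathrm{II}}}\big(\frac{1+\eta}{2}\big)^{(M_{\mathrm{II}}+h+\frac12)M_{\mathrm{I}}}$. *)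

From HB Require Import structures.
From mathcomp Require Import all_boot all_order all_algebra.
From mathcomp Require Import all_classical all_reals.
From mathcomp Require Import topology normedtype derive exp.
Set Implicit Arguments. Unset Strict Implicit. Unset Printing Implicit Defensive.
Import Order.TTheory GRing.Theory Num.Theory.
Local Open Scope ring_scope.

Section Defs.
Variable R : realType.

Definition poch (a : R) (k : nat) : R := \prod_(i < k) (a + i%:R).

(* Jacobi polynomial P^{(al,be)}_m(x), m : nat, via the first (always defined) formula *)
Definition jacobiP (al be : R) (m : nat) (x : R) : R :=
  (m`!%:R)^-1 * \sum_(k < m.+1)
    (poch (- m%:R) k * poch (m%:R + al + be + 1) k
       * poch (al + k%:R + 1) (m - k) / (k`!%:R)) * ((1 - x) / 2) ^+ k.

Definition jacobiPz (al be : R) (m : int) (x : R) : R :=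
  match m with Posz k => jacobiP al be k x | Negz _ => 0 end.

Inductive stype := TI | TII.

Definition seed_ok (g h : R) (v : nat) (t : stype) : Prop :=
  match t with TI => v%:R < h - 1/2 | TII => v%:R < g - 1/2 end.

Definition mu (g h : R) (v : nat) (t : stype) (x : R) : R :=
  match t with
  | TI => ((1 + x) / 2) `^ (1/2 - h) * jacobiP (g - 1/2) (1/2 - h) v x
  | TII => ((1 - x) / 2) `^ (1/2 - g) * jacobiP (1/2 - g) (h - 1/2) v x
  end.

Definition Pn (g h : R) (n : nat) (x : R) : R := jacobiP (g - 1/2) (h - 1/2) n x.

Definition wronskian (m : nat) (f : 'I_m -> R -> R) (x : R) : R :=
  \det (\matrix_(j < m, k < m) @derive1n R R^o j (f k) x).

Definition countI (M : nat) (t : 'I_M -> stype) : nat :=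
  (\sum_(i < M) (if t i is TI then 1 else 0))%N.
Definition countII (M : nat) (t : 'I_M -> stype) : nat :=
  (\sum_(i < M) (if t i is TII then 1 else 0))%N.

Definition XiD (g h : R) (M : nat) (d : 'I_M -> nat) (t : 'I_M -> stype) (x : R) : R :=
  let MI := (countI t)%:R in let MII := (countII t)%:R in
  wronskian (fun k => mu g h (d k) (t k)) x
  * ((1 - x) / 2) `^ ((MI + g - 1/2) * MII)
  * ((1 + x) / 2) `^ ((MII + h - 1/2) * MI).

(* list D followed by P_n *)
Definition ext_fun (g h : R) (M : nat) (d : 'I_M -> nat) (t : 'I_M -> stype) (n : nat)
  (k : 'I_M.+1) : R -> R :=
  match unlift ord_max k with
  | Some k' => mu g h (d k') (t k')
  | None => Pn g h n
  end.

Definition PDn (g h : R) (M : nat) (d : 'I_M -> nat) (t : 'I_M -> stype) (n : nat) (x : R) : R :=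
  let MI := (countI t)%:R in let MII := (countII t)%:R in
  wronskian (ext_fun g h d t n) x
  * ((1 - x) / 2) `^ ((MI + g + 1/2) * MII)
  * ((1 + x) / 2) `^ ((MII + h + 1/2) * MI).

(* X^{(N)}_{(v,t),j}(x) with j = j' + 1, j' : 'I_N (0-based) *)
Definition Xent (g h : R) (N : nat) (v : nat) (t : stype) (j : nat) (x : R) : R :=
  match t with
  | TI => (-1) ^+ j / 2 ^+ j * poch (h - 1/2 - v%:R) j * ((1 + x) / 2) ^+ (N.-1 - j)
          * jacobiP (g + j%:R - 1/2) (1/2 - h - j%:R) v x
  | TII => 1 / 2 ^+ j * poch (g - 1/2 - v%:R) j * ((1 - x) / 2) ^+ (N.-1 - j)
          * jacobiP (1/2 - g - j%:R) (h + j%:R - 1/2) v x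
  end.

(* Z^{(N)}_{n,j}(x) with j = j' + 1 : index n + 1 - j = n - j' (possibly negative) *)
Definition Zent (g h : R) (n : nat) (j : nat) (x : R) : R :=
  1 / 2 ^+ j * poch (n%:R + g + h) j
  * jacobiPz (g + j%:R - 1/2) (h + j%:R - 1/2) (n%:Z - j%:Z) x.

Definition Amul (MI MII : nat) (x : R) : R :=
  ((1 + x) / 2) ^- (MI * (MI - 1)) * ((1 - x) / 2) ^- (MII * (MII - 1)).

End Defs.

From HB Require Import structures.
From mathcomp Require Import all_boot all_order all_algebra.
From mathcomp Require Import all_classical all_reals.
From mathcomp Require Import topology normedtype derive exp.
From mathcomp Require Import ring lra zify.
Set Implicit Arguments. Unset Strict Implicit. Unset Printing Implicit Defensive.
Import Order.TTheory GRing.Theory Num.Theory numFieldNormedType.Exports.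
Local Open Scope ring_scope.

(* In the variable y = (1 - x)/2, n! P^(a,b)_n is the polynomial with coefficients
   jacobi_coef a b n k, and these coefficients obey two-term relations under the
   parameter shifts (a+1, b+1), (a+1, b-1) and (a-1, b+1).  They give, with u = (1 + x)/2,
     d/dx P^(a,b)_(n+1)   = (n+a+b+2)/2 P^(a+1,b+1)_n,
     d/dx [u^b P^(a,b)_n] = (n+b)/2 u^(b-1) P^(a+1,b-1)_n,
     d/dx [y^a P^(a,b)_n] = -(n+a)/2 y^(a-1) P^(a-1,b+1)_n.
   Iterating, the j-th derivative of a seed function of type I (resp. II) is the entry
   X_j of its column divided by u^(N-1+h-1/2) (resp. y^(N-1+g-1/2)), a factor depending
   on the type but not on j, and the j-th derivative of P_n is Z_j.  Pulling these column
   factors out of the Wronskian and collecting the powers of u and y with the prefactors of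
   Xi_D and P_(D,n) leaves exactly A(x). *)

Lemma det_mx_colscale (T : comPzRingType) m (A : 'M[T]_m) (c : 'I_m -> T) :
  \det (\matrix_(j, k) (A j k * c k)) = \det A * \prod_k c k.
Proof.
have -> : \matrix_(j, k) (A j k * c k) = A *m diag_mx (\row_k c k).
  by rewrite mul_mx_diag; apply/matrixP => j k; rewrite !mxE.
by rewrite det_mulmx det_diag; congr (_ * _); apply: eq_bigr => k _; rewrite mxE.
Qed.

Lemma prod_stype (T : comPzRingType) M (t : 'I_M -> stype) (A B : T) :
  \prod_(k < M) (if t k is TI then A else B) = A ^+ countI t * B ^+ countII t.
Proof.
elim: M t => [|M IH] t; first by rewrite big_ord0 /countI /countII !big_ord0 mulr1.
rewrite big_ord_recl /countI /countII !big_ord_recl -/(countI _) -/(countII _) IH.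
by case: (t ord0); rewrite ?add0n ?add1n exprS; [exact: mulrA | exact: mulrCA].
Qed.

Section JacobiCoefficients.
Variable R : realType.
Implicit Types (a b y : R) (n k : nat).

Lemma poch0 a : poch a 0 = 1.
Proof. by rewrite /poch big_ord0. Qed.

Lemma pochS a k : poch a k.+1 = a * poch (a + 1) k.
Proof.
rewrite /poch big_ord_recl addr0; congr (_ * _); apply: eq_bigr => i _.
by rewrite -natr1; ring.
Qed.

Lemma pochSr a k : poch a k.+1 = poch a k * (a + k%:R).
Proof. by rewrite /poch big_ord_recr. Qed.

Definition jacobi_coef a b n k : R :=
  poch (- n%:R) k * poch (n%:R + a + b + 1) k * poch (a + k%:R + 1) (n - k) / k`!%:R.

Lemma jacobiPE a b n (x : R) :
  jacobiP a b n x = n`!%:R^-1 * \sum_(k < n.+1) jacobi_coef a b n k * ((1 - x) / 2) ^+ k.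
Proof. by []. Qed.

Lemma jacobiP0 a b (x : R) : jacobiP a b 0 x = 1.
Proof. by rewrite jacobiPE big_ord1 /jacobi_coef !poch0 /= fact0 expr0 invr1 !mul1r. Qed.

Lemma jacobi_coef_out a b n : jacobi_coef a b n n.+1 = 0.
Proof. by rewrite /jacobi_coef pochSr addNr !(mulr0, mul0r). Qed.

Lemma natr_fact_neq0 k : (k`!%:R : R) != 0.
Proof. by rewrite pnatr_eq0 -lt0n fact_gt0. Qed.

Lemma jacobi_coef_deriv a b n k :
  k.+1%:R * jacobi_coef a b n.+1 k.+1
  = - (n.+1%:R * (n.+1%:R + a + b + 1)) * jacobi_coef (a + 1) (b + 1) n k.
Proof.
rewrite /jacobi_coef !pochS factS natrM subSS.
have -> : - n.+1%:R + 1 = - n%:R :> R by rewrite -natr1; ring.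
have -> : n.+1%:R + a + b + 1 + 1 = n%:R + (a + 1) + (b + 1) + 1 :> R by rewrite -natr1; ring.
have -> : a + k.+1%:R + 1 = a + 1 + k%:R + 1 :> R by rewrite -natr1; ring.
by field; rewrite natr_fact_neq0 nat1r pnatr_eq0.
Qed.

Lemma jacobi_coef_incr_a_decr_b a b n k : (k <= n)%N ->
  (n%:R + b) * jacobi_coef (a + 1) (b - 1) n k
  = (b + k%:R) * jacobi_coef a b n k - k.+1%:R * jacobi_coef a b n k.+1.
Proof.
rewrite leq_eqVlt => /orP [/eqP ->|lt_kn].
  rewrite jacobi_coef_out mulr0 subr0 /jacobi_coef subnn !poch0 !mulr1.
  have -> : n%:R + (a + 1) + (b - 1) + 1 = n%:R + a + b + 1 :> R by ring.
  ring.
have [m ->] : exists m, n = (k + m.+1)%N by exists (n - k.+1)%N; lia.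
rewrite /jacobi_coef.
have -> : (k + m.+1 - k = m.+1)%N by lia.
have -> : (k + m.+1 - k.+1 = m)%N by lia.
rewrite (pochS (a + k%:R + 1)) (pochSr (a + 1 + k%:R + 1)) (pochSr (- _)).
rewrite (pochSr (_ + a + b + 1)) factS natrM.
have -> : (k + m.+1)%:R + (a + 1) + (b - 1) + 1 = (k + m.+1)%:R + a + b + 1 :> R by ring.
have -> : a + k.+1%:R + 1 = a + k%:R + 1 + 1 :> R by rewrite -natr1; ring.
have -> : a + 1 + k%:R + 1 = a + k%:R + 1 + 1 :> R by ring.
rewrite natrD -!natr1.
by field; rewrite natr_fact_neq0 natr1 pnatr_eq0.
Qed.

Lemma jacobi_coef_decr_a_incr_b a b n k : (k <= n)%N ->
  (n%:R + a) * jacobi_coef (a - 1) (b + 1) n k = (a + k%:R) * jacobi_coef a b n k.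
Proof.
move=> le_kn; rewrite /jacobi_coef.
have -> : n%:R + (a - 1) + (b + 1) + 1 = n%:R + a + b + 1 :> R by ring.
have -> : a - 1 + k%:R + 1 = a + k%:R :> R by ring.
have shift : (a + k%:R) * poch (a + k%:R + 1) (n - k) = (n%:R + a) * poch (a + k%:R) (n - k).
  by rewrite -pochS pochSr natrB // mulrC; congr (_ * _); ring.
set A := poch (- n%:R) k; set B := poch (n%:R + a + b + 1) k.
transitivity (A * B * ((a + k%:R) * poch (a + k%:R + 1) (n - k)) / k`!%:R); last by ring.
by rewrite shift; ring.
Qed.

Lemma sum_deriv_shift (c : nat -> R) n y :
  y * \sum_(k < n) k.+1%:R * c k.+1 * y ^+ k = \sum_(k < n.+1) k%:R * c k * y ^+ k.
Proof.
rewrite big_ord_recl /= !mul0r add0r mulr_sumr; apply: eq_bigr => k _.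
by rewrite -[bump 0 k]/k.+1 exprS; ring.
Qed.

Lemma sum_deriv_extend (c : nat -> R) n y : c n.+1 = 0 ->
  \sum_(k < n) k.+1%:R * c k.+1 * y ^+ k = \sum_(k < n.+1) k.+1%:R * c k.+1 * y ^+ k.
Proof. by move=> c_out; rewrite big_ord_recr /= c_out mulr0 mul0r addr0. Qed.

Lemma jacobi_sum_incr_a_decr_b a b n y :
  (n%:R + b) * \sum_(k < n.+1) jacobi_coef (a + 1) (b - 1) n k * y ^+ k
  = b * \sum_(k < n.+1) jacobi_coef a b n k * y ^+ k
    - (1 - y) * \sum_(k < n) k.+1%:R * jacobi_coef a b n k.+1 * y ^+ k.
Proof.
rewrite mulr_sumr (eq_bigr (fun k : 'I_n.+1 => ((b + k%:R) * jacobi_coef a b n k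
    - k.+1%:R * jacobi_coef a b n k.+1) * y ^+ k)); last first.
  by move=> k _; rewrite mulrA jacobi_coef_incr_a_decr_b // -ltnS.
rewrite mulrBl mul1r sum_deriv_shift (sum_deriv_extend y (jacobi_coef_out a b n)).
rewrite mulr_sumr opprB addrC -sumrB -!big_split /=; apply: eq_bigr => k _; ring.
Qed.

Lemma jacobi_sum_decr_a_incr_b a b n y :
  (n%:R + a) * \sum_(k < n.+1) jacobi_coef (a - 1) (b + 1) n k * y ^+ k
  = a * \sum_(k < n.+1) jacobi_coef a b n k * y ^+ k
    + y * \sum_(k < n) k.+1%:R * jacobi_coef a b n k.+1 * y ^+ k.
Proof.
rewrite mulr_sumr (eq_bigr (fun k : 'I_n.+1 => (a + k%:R) * jacobi_coef a b n k * y ^+ k)).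
  by rewrite sum_deriv_shift mulr_sumr -big_split /=; apply: eq_bigr => k _; ring.
by move=> k _; rewrite mulrA jacobi_coef_decr_a_incr_b // -ltnS.
Qed.

End JacobiCoefficients.

Section JacobiDerivatives.
Variable R : realType.
Implicit Types (a b x : R) (n j v : nat).

Lemma is_derive1_comp (f g : R -> R) x (df dg : R) :
  is_derive x 1 f df -> is_derive (f x) 1 g dg -> is_derive x 1 (g \o f) (dg * df).
Proof.
move=> [df_ex <-] [dg_ex <-]; apply: DeriveDef.
  by apply/derivable1_diffP/differentiable_comp; exact/derivable1_diffP.
by rewrite -derive1E derive1_comp // !derive1E.
Qed.

Lemma is_derive_half_1m x : is_derive x 1 (fun z : R => (1 - z) / 2) (- 2^-1).
Proof.
have h : is_derive x 1 ((cst 1 - id) * cst 2^-1 : R -> R) ((1 - x) *: 0 + 2^-1 *: (0 - 1)).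
  exact: is_deriveM.
by apply: (is_derive_eq h); rewrite scaler0 add0r sub0r scalerN /GRing.scale /= mulr1.
Qed.

Lemma is_derive_half_1p x : is_derive x 1 (fun z : R => (1 + z) / 2) 2^-1.
Proof.
have h : is_derive x 1 ((cst 1 + id) * cst 2^-1 : R -> R) ((1 + x) *: 0 + 2^-1 *: (0 + 1)).
  exact: is_deriveM.
by apply: (is_derive_eq h); rewrite scaler0 !add0r /GRing.scale /= mulr1.
Qed.

Lemma is_derive_powR_half_1p b x : -1 < x ->
  is_derive x 1 (fun z : R => ((1 + z) / 2) `^ b) (b * ((1 + x) / 2) `^ (b - 1) * 2^-1).
Proof.
move=> gt_x; have pos : 0 < (1 + x) / 2 by apply: divr_gt0 => //; lra.
exact: (is_derive1_comp (is_derive_half_1p x) (is_derive1_powR b pos)).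
Qed.

Lemma is_derive_powR_half_1m a x : x < 1 ->
  is_derive x 1 (fun z : R => ((1 - z) / 2) `^ a) (a * ((1 - x) / 2) `^ (a - 1) * - 2^-1).
Proof.
move=> lt_x; have pos : 0 < (1 - x) / 2 by apply: divr_gt0 => //; lra.
exact: (is_derive1_comp (is_derive_half_1m x) (is_derive1_powR a pos)).
Qed.

Lemma is_derive_sum_half_1m (p : nat -> R) n x :
  is_derive x 1 (fun z : R => \sum_(k < n.+1) p k * ((1 - z) / 2) ^+ k)
    (- 2^-1 * \sum_(k < n) k.+1%:R * p k.+1 * ((1 - x) / 2) ^+ k).
Proof.
pose P := \poly_(k < n.+1) p k.
have -> : (fun z : R => \sum_(k < n.+1) p k * ((1 - z) / 2) ^+ k)
          = horner P \o (fun z => (1 - z) / 2).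
  by apply/funext => z; rewrite /= horner_poly.
apply: (is_derive_eq (is_derive1_comp (is_derive_half_1m x) (is_derive_poly P _))).
rewrite mulrC (@horner_coef_wide _ n); last first.
  by apply: leq_trans (size_poly _ _) _; rewrite -subn1 leq_subLR add1n size_poly.
congr (_ * _); apply: eq_bigr => i _.
by rewrite coef_deriv coef_poly ltnS ltn_ord mulr_natl.
Qed.

Lemma is_derive_jacobiP_sum a b n x : is_derive x 1 (jacobiP a b n)
  (n`!%:R^-1 * (- 2^-1 * \sum_(k < n) k.+1%:R * jacobi_coef a b n k.+1 * ((1 - x) / 2) ^+ k)).
Proof.
have -> : jacobiP a b n
  = n`!%:R^-1 *: (fun z => \sum_(k < n.+1) jacobi_coef a b n k * ((1 - z) / 2) ^+ k) by [].
exact: (is_deriveZ _ (is_derive_sum_half_1m _ n x)).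
Qed.

Lemma is_derive_jacobiP a b n x : is_derive x 1 (jacobiP a b n.+1)
  ((n.+1%:R + a + b + 1) / 2 * jacobiP (a + 1) (b + 1) n x).
Proof.
apply: (is_derive_eq (is_derive_jacobiP_sum a b n.+1 x)).
under eq_bigr => k _ do rewrite jacobi_coef_deriv -mulrA.
rewrite -mulr_sumr jacobiPE factS natrM.
by field; rewrite natr_fact_neq0 nat1r pnatr_eq0.
Qed.

Lemma powR_sub1 (u b : R) : 0 < u -> u * u `^ (b - 1) = u `^ b.
Proof.
move=> u_gt0; rewrite -{1}(powRr1 (ltW u_gt0)) -powRD ?(gt_eqF u_gt0) ?implybT //.
by congr (_ `^ _); ring.
Qed.

Lemma is_derive_powR_1p_jacobiP a b n x : -1 < x ->
  is_derive x 1 (fun z => ((1 + z) / 2) `^ b * jacobiP a b n z)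
    ((n%:R + b) / 2 * ((1 + x) / 2) `^ (b - 1) * jacobiP (a + 1) (b - 1) n x).
Proof.
move=> gt_x; have u_gt0 : 0 < (1 + x) / 2 by apply: divr_gt0 => //; lra.
apply: (is_derive_eq (is_deriveM (is_derive_powR_half_1p b gt_x) (is_derive_jacobiP_sum a b n x))).
rewrite /GRing.scale /= !jacobiPE -(powR_sub1 b u_gt0).
have -> : (1 + x) / 2 = 1 - (1 - x) / 2 by field.
set y := (1 - x) / 2; set Q := _ `^ (b - 1).
transitivity (Q / n`!%:R / 2 *
  ((n%:R + b) * \sum_(k < n.+1) jacobi_coef (a + 1) (b - 1) n k * y ^+ k)); last by ring.
by rewrite jacobi_sum_incr_a_decr_b; ring.
Qed.

Lemma is_derive_powR_1m_jacobiP a b n x : x < 1 ->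
  is_derive x 1 (fun z => ((1 - z) / 2) `^ a * jacobiP a b n z)
    (- (n%:R + a) / 2 * ((1 - x) / 2) `^ (a - 1) * jacobiP (a - 1) (b + 1) n x).
Proof.
move=> lt_x; have y_gt0 : 0 < (1 - x) / 2 by apply: divr_gt0 => //; lra.
apply: (is_derive_eq (is_deriveM (is_derive_powR_half_1m a lt_x) (is_derive_jacobiP_sum a b n x))).
rewrite /GRing.scale /= !jacobiPE -(powR_sub1 a y_gt0).
set y := (1 - x) / 2; set Q := _ `^ (a - 1).
transitivity (- Q / n`!%:R / 2 *
  ((n%:R + a) * \sum_(k < n.+1) jacobi_coef (a - 1) (b + 1) n k * y ^+ k)); last by ring.
by rewrite jacobi_sum_decr_a_incr_b; ring.
Qed.

Lemma derive1nS_near (f F : R -> R) j x (d : R) :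
  (\forall z \near x, @derive1n R R^o j f z = F z) -> is_derive x 1 F d ->
  @derive1n R R^o j.+1 f x = d.
Proof. by move=> fF [_ <-]; rewrite derive1nS derive1E (near_eq_derive _ fF). Qed.

Lemma derive1n_powR_1p_jacobiP a b v j x : -1 < x ->
  @derive1n R R^o j (fun z => ((1 + z) / 2) `^ b * jacobiP a b v z) x =
  (-1) ^+ j / 2 ^+ j * poch (- (v%:R + b)) j *
    (((1 + x) / 2) `^ (b - j%:R) * jacobiP (a + j%:R) (b - j%:R) v x) :> R.
Proof.
elim: j x => [|j IH] x gt_x.
  by rewrite derive1n0 !expr0 poch0 !subr0 addr0 divr1 !mul1r.
set c := (-1) ^+ j / 2 ^+ j * poch (- (v%:R + b)) j.
have dF := is_deriveZ c (is_derive_powR_1p_jacobiP (a + j%:R) (b - j%:R) v gt_x).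
rewrite (derive1nS_near _ dF).
  have -> : b - j%:R - 1 = b - j.+1%:R by rewrite -natr1; ring.
  have -> : a + j%:R + 1 = a + j.+1%:R by rewrite -natr1; ring.
  rewrite /GRing.scale /= /c pochSr !exprS -[j.+1%:R]natr1.
  by field; rewrite expf_neq0 // pnatr_eq0.
by near=> z; apply: IH; near: z; exact: lt_nbhsr.
Unshelve. all: by end_near. Qed.

Lemma derive1n_powR_1m_jacobiP a b v j x : x < 1 ->
  @derive1n R R^o j (fun z => ((1 - z) / 2) `^ a * jacobiP a b v z) x =
  1 / 2 ^+ j * poch (- (v%:R + a)) j *
    (((1 - x) / 2) `^ (a - j%:R) * jacobiP (a - j%:R) (b + j%:R) v x) :> R.
Proof.
elim: j x => [|j IH] x lt_x.
  by rewrite derive1n0 !expr0 poch0 !subr0 addr0 divr1 !mul1r.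
set c := 1 / 2 ^+ j * poch (- (v%:R + a)) j.
have dF := is_deriveZ c (is_derive_powR_1m_jacobiP (a - j%:R) (b + j%:R) v lt_x).
rewrite (derive1nS_near _ dF).
  have -> : a - j%:R - 1 = a - j.+1%:R by rewrite -natr1; ring.
  have -> : b + j%:R + 1 = b + j.+1%:R by rewrite -natr1; ring.
  rewrite /GRing.scale /= /c pochSr !exprS -[j.+1%:R]natr1.
  by field; rewrite expf_neq0 // pnatr_eq0.
by near=> z; apply: IH; near: z; exact: lt_nbhsl.
Unshelve. all: by end_near. Qed.

(* Indexing by an integer makes the rule uniform: it also covers the constant P_0 and the
   zero polynomials of negative index, as needed for the column of P_n. *)
Lemma is_derive_jacobiPz a b (m : int) x : is_derive x 1 (jacobiPz a b m)
  ((m%:~R + a + b + 1) / 2 * jacobiPz (a + 1) (b + 1) (m - 1) x).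
Proof.
case: m => [[|n]|n].
- have -> : jacobiPz a b 0 = cst 1 by apply/funext => z; exact: jacobiP0.
  by apply: (is_derive_eq (is_derive_cst _ _ _)); rewrite mulr0.
- have -> : n.+1%:Z - 1 = n%:Z by lia.
  exact: is_derive_jacobiP.
- have -> : jacobiPz a b (Negz n) = cst 0 by [].
  by apply: (is_derive_eq (is_derive_cst _ _ _)); rewrite mulr0.
Qed.

Lemma derive1n_jacobiPz a b (m : int) j x : @derive1n R R^o j (jacobiPz a b m) x
  = poch (m%:~R + a + b + 1) j / 2 ^+ j * jacobiPz (a + j%:R) (b + j%:R) (m - j%:Z) x :> R.
Proof.
elim: j x => [|j IH] x.
  by rewrite derive1n0 poch0 expr0 !addr0 divr1 mul1r.
set c := poch (m%:~R + a + b + 1) j / 2 ^+ j.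
have dF := is_deriveZ c (is_derive_jacobiPz (a + j%:R) (b + j%:R) (m - j%:Z) x).
rewrite (derive1nS_near _ dF).
  have -> : m - j%:Z - 1 = m - j.+1%:Z by lia.
  have -> : a + j%:R + 1 = a + j.+1%:R by rewrite -natr1; ring.
  have -> : b + j%:R + 1 = b + j.+1%:R by rewrite -natr1; ring.
  rewrite /GRing.scale /= /c pochSr exprS intrB.
  by field; rewrite expf_neq0 // pnatr_eq0.
by near=> z; rewrite IH.
Unshelve. all: by end_near. Qed.

End JacobiDerivatives.

Section WronskianColumns.
Variable R : realType.
Implicit Types (g h x : R) (MI MII N e n v j : nat).

Definition col_weight g h x N (t : stype) : R :=
  match t with
  | TI => ((1 + x) / 2) `^ ((N.-1)%:R + h - 1/2)
  | TII => ((1 - x) / 2) `^ ((N.-1)%:R + g - 1/2)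
  end.

Lemma powR_nat_split (u p q : R) k : 0 < u -> p + q = k%:R -> u ^+ k = u `^ p * u `^ q.
Proof.
by move=> u_gt0 pq; rewrite -powR_mulrn ?ltW // -pq powRD // (gt_eqF u_gt0) implybT.
Qed.

Lemma Xent_derive1n g h N v t j x : (j < N)%N -> -1 < x < 1 ->
  Xent g h N v t j x = @derive1n R R^o j (mu g h v t) x * col_weight g h x N t.
Proof.
move=> lt_jN /andP[gt_x lt_x].
have le_jN : (j <= N.-1)%N by rewrite -ltnS prednK // (leq_ltn_trans _ lt_jN).
case: t; rewrite /Xent /col_weight /mu /=.
- rewrite derive1n_powR_1p_jacobiP //.
  rewrite (@powR_nat_split ((1 + x) / 2) (1/2 - h - j%:R) ((N.-1)%:R + h - 1/2)).
  + have -> : - (v%:R + (1/2 - h)) = h - 1/2 - v%:R by ring.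
    have -> : g - 1/2 + j%:R = g + j%:R - 1/2 by ring.
    ring.
  + by apply: divr_gt0 => //; lra.
  + by rewrite natrB //; ring.
- rewrite derive1n_powR_1m_jacobiP //.
  rewrite (@powR_nat_split ((1 - x) / 2) (1/2 - g - j%:R) ((N.-1)%:R + g - 1/2)).
  + have -> : - (v%:R + (1/2 - g)) = g - 1/2 - v%:R by ring.
    have -> : h - 1/2 + j%:R = h + j%:R - 1/2 by ring.
    ring.
  + by apply: divr_gt0 => //; lra.
  + by rewrite natrB //; ring.
Qed.

Lemma Zent_derive1n g h n j x : Zent g h n j x = @derive1n R R^o j (Pn g h n) x.
Proof.
rewrite -[Pn g h n]/(jacobiPz (g - 1/2) (h - 1/2) n) derive1n_jacobiPz pmulrn /Zent.
have -> : n%:R + (g - 1/2) + (h - 1/2) + 1 = n%:R + g + h :> R by field.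
have -> : g - 1/2 + j%:R = g + j%:R - 1/2 by ring.
have -> : h - 1/2 + j%:R = h + j%:R - 1/2 by ring.
ring.
Qed.

Lemma prod_col_weight g h x N M (t : 'I_M -> stype) : -1 < x < 1 ->
  \prod_(k < M) col_weight g h x N (t k)
  = ((1 + x) / 2) `^ (((N.-1)%:R + h - 1/2) * (countI t)%:R)
    * ((1 - x) / 2) `^ (((N.-1)%:R + g - 1/2) * (countII t)%:R).
Proof.
move=> /andP[gt_x lt_x]; rewrite (prod_stype t).
by rewrite !powRrM !powR_mulrn // powR_ge0.
Qed.

Lemma col_weight_exponent (c : R) MI MII e N : (N = MI + MII + e)%N ->
  - (MI * (MI - 1))%:R + ((N.-1)%:R + c - 1/2) * MI%:R = (MII%:R + e%:R + c - 1/2) * MI%:R.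
Proof.
move->; case: MI => [|m]; first by rewrite !mulr0 mul0n oppr0 add0r.
by rewrite !addSn /= subn1 /= natrM !natrD -natr1; ring.
Qed.

Lemma Amul_prod_col_weight g h x MI MII e N (t : 'I_(MI + MII) -> stype) :
  (N = MI + MII + e)%N -> countI t = MI -> countII t = MII -> -1 < x < 1 ->
  Amul MI MII x * \prod_k col_weight g h x N (t k)
  = ((1 - x) / 2) `^ ((MI%:R + e%:R + g - 1/2) * MII%:R)
    * ((1 + x) / 2) `^ ((MII%:R + e%:R + h - 1/2) * MI%:R).
Proof.
move=> NE cI cII x_range; have /andP[gt_x lt_x] := x_range.
have u_gt0 : 0 < (1 + x) / 2 by apply: divr_gt0 => //; lra.
have w_gt0 : 0 < (1 - x) / 2 by apply: divr_gt0 => //; lra.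
rewrite prod_col_weight // cI cII /Amul -!powR_invn ?ltW // mulrACA mulrC.
rewrite -!powRD ?(gt_eqF u_gt0) ?(gt_eqF w_gt0) ?implybT //.
by congr (_ `^ _ * _ `^ _); apply: col_weight_exponent; lia.
Qed.

Lemma XiD_det g h MI MII (d : 'I_(MI + MII) -> nat) t x :
  countI t = MI -> countII t = MII -> -1 < x < 1 ->
  XiD g h d t x
  = Amul MI MII x
    * \det (\matrix_(j < MI + MII, k < MI + MII) Xent g h (MI + MII) (d k) (t k) j x).
Proof.
move=> cI cII x_range.
have -> : \matrix_(j < MI + MII, k < MI + MII) Xent g h (MI + MII) (d k) (t k) j x
  = \matrix_(j, k) ((\matrix_(j' < MI + MII, k' < MI + MII)
                        @derive1n R R^o j' (mu g h (d k') (t k')) x) j k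
                    * col_weight g h x (MI + MII) (t k)).
  by apply/matrixP => j k; rewrite !mxE Xent_derive1n.
rewrite det_mx_colscale mulrCA (Amul_prod_col_weight g h (esym (addn0 _)) cI cII x_range).
by rewrite /XiD /wronskian /= cI cII mulr0n !addr0 mulrA.
Qed.

Lemma PDn_det g h MI MII (d : 'I_(MI + MII) -> nat) t n x :
  countI t = MI -> countII t = MII -> -1 < x < 1 ->
  PDn g h d t n x
  = Amul MI MII x * \det (\matrix_(j < (MI + MII).+1, k < (MI + MII).+1)
      match unlift ord_max k with
      | Some k' => Xent g h (MI + MII).+1 (d k') (t k') j x
      | None => Zent g h n j x
      end).
Proof.
move=> cI cII x_range.
pose weight k :=
  if unlift ord_max k is Some k' then col_weight g h x (MI + MII).+1 (t k') else 1.
have -> : \matrix_(j < (MI + MII).+1, k < (MI + MII).+1) match unlift ord_max k with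
      | Some k' => Xent g h (MI + MII).+1 (d k') (t k') j x
      | None => Zent g h n j x
      end
  = \matrix_(j, k) ((\matrix_(j' < (MI + MII).+1, k' < (MI + MII).+1)
                      @derive1n R R^o j' (ext_fun g h d t n k') x) j k
                    * weight k).
  apply/matrixP => j k; rewrite !mxE /weight /ext_fun.
  by case: unlift => [k'|]; [exact: Xent_derive1n | rewrite Zent_derive1n mulr1].
rewrite det_mx_colscale (bigD1_ord ord_max) //= {1}/weight unlift_none mul1r.
under eq_bigr => k _ do rewrite /weight liftK.
rewrite mulrCA (Amul_prod_col_weight g h (esym (addn1 _)) cI cII x_range).
have half_up (a b : R) : a + 1%:R + b - 1/2 = a + b + 1/2 by field.
by rewrite /PDn /wronskian /= cI cII !half_up mulrA.
Qed.

End WronskianColumns.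

Theorem mainTheorem2 (R : realType) (g h : R) (MI MII : nat)
  (d : 'I_(MI + MII) -> nat) (t : 'I_(MI + MII) -> stype) (n : nat) (x : R) :
  1/2 < g -> 1/2 < h ->
  (forall k, seed_ok g h (d k) (t k)) ->
  (forall k l, d k = d l -> t k = t l -> k = l) ->
  countI t = MI -> countII t = MII ->
  -1 < x < 1 ->
  XiD g h d t x
    = Amul MI MII x
      * \det (\matrix_(j < MI + MII, k < MI + MII) Xent g h (MI + MII) (d k) (t k) j x)
  /\
  PDn g h d t n x
    = Amul MI MII x
      * \det (\matrix_(j < (MI + MII).+1, k < (MI + MII).+1)
                match unlift ord_max k with
                | Some k' => Xent g h (MI + MII).+1 (d k') (t k') j x
                | None => Zent g h n j x
                end).
Proof.
move=> _ _ _ _ cI cII x_range.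
by split; [exact: XiD_det | exact: PDn_det].
Qed.
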